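(* Let $(T,[\cdot,\cdot],[\cdot,\cdot,\cdot],\alpha)$ be a Hom-Lie-Yamaguti algebra, and let $\nu:T\times T\to T$ be bilinear and $\omega:T\times T\times T\to T$ trilinear. For $\lambda\in\mathbb{K}$ set $$[x_1,x_2]_\lambda=[x_1,x_2]+\lambda\nu(x_1,x_2),\qquad [x_1,x_2,x_3]_\lambda=[x_1,x_2,x_3]+\lambda\omega(x_1,x_2,x_3).$$ Say that $(\nu,\omega)$ generates a $\lambda$-parameter infinitesimal deformation of $T$ if $(T,[\cdot,\cdot]_\lambda,[\cdot,\cdot,\cdot]_\lambda,\alpha)$ is a Hom-Lie-Yamaguti algebra for every $\lambda$. Then $(\nu,\omega)$ generates a $\lambda$-parameter infinitesimal deformation of $T$ if and only if the following two conditions hold: (i) $(T,\nu,\omega,\alpha)$ is a Hom-Lie-Yamaguti algebra of deformation type; (ii) $(\nu,\omega)$ is a (2,3)-cocycle of $T$ with coefficients in the adjoint representation.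
   Context: Throughout, vector spaces are over an algebraically closed field $\mathbb{K}$ of characteristic different from 2 and 3. A Hom-Lie-Yamaguti algebra (HLYA) is a vector space $T$ with a linear map $\alpha:T\to T$, a bilinear map $[\cdot,\cdot]$ and a trilinear map $[\cdot,\cdot,\cdot]$ on $T$ such that for all $x_i,y_i\in T$: (HLY01) $\alpha([x_1,x_2])=[\alpha(x_1),\alpha(x_2)]$; (HLY02) $\alpha([x_1,x_2,x_3])=[\alpha(x_1),\alpha(x_2),\alpha(x_3)]$; (HLY1) $[x_1,x_2]+[x_2,x_1]=0$; (HLY2) $[x_1,x_2,x_3]+[x_2,x_1,x_3]=0$; (HLY3) $\sum_{\mathrm{cyc}(x_1,x_2,x_3)}([[x_1,x_2],\alpha(x_3)]+[x_1,x_2,x_3])=0$; (HLY4) $[[x_1,x_2],\alpha(x_3),\alpha(y_1)]+[[x_2,x_3],\alpha(x_1),\alpha(y_1)]+[[x_3,x_1],\alpha(x_2),\alpha(y_1)]=0$; (HLY5) $[\alpha(x_1),\alpha(x_2),[y_1,y_2]]=[[x_1,x_2,y_1],\alpha^2(y_2)]+[\alpha^2(y_1),[x_1,x_2,y_2]]$; (HLY6) $[\alpha^2(x_1),\alpha^2(x_2),[y_1,y_2,y_3]]=[[x_1,x_2,y_1],\alpha^2(y_2),\alpha^2(y_3)]+[\alpha^2(y_1),[x_1,x_2,y_2],\alpha^2(y_3)]+[\alpha^2(y_1),\alpha^2(y_2),[x_1,x_2,y_3]]$. A HLYA of deformation type is a vector space $T$ with linear $\alpha:T\to T$, bilinear $\nu:T\times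 T\to T$ and trilinear $\omega:T^3\to T$ satisfying (HLY01), (HLY02), (HLY1), (HLY2), (HLY4), (HLY5), (HLY6) with $[\cdot,\cdot]$ replaced by $\nu$ and $[\cdot,\cdot,\cdot]$ replaced by $\omega$, and, instead of (HLY3), the condition (HLY3') $\nu(\nu(x_1,x_2),\alpha(x_3))+\nu(\nu(x_2,x_3),\alpha(x_1))+\nu(\nu(x_3,x_1),\alpha(x_2))=0$. The adjoint representation of the HLYA $(T,\alpha)$ is the representation on the Hom-vector space $(T,\alpha)$ given by $\rho(x_1)(x_2)=[x_1,x_2]$, $D(x_1,x_2)x_3=[x_1,x_2,x_3]$, $\theta(x_1,x_2)x_3=[x_3,x_1,x_2]$ (here $\beta=\alpha$). For a representation $(\rho,D,\theta)$ on $(V,\beta)$ (in particular the adjoint one), a (2,3)-cocycle is a pair $(\nu,\omega)$ of a bilinear map $\nu:T\times T\to V$ and a trilinear map $\omega:T^3\to V$ such that $\nu(x_1,x_2)=-\nu(x_2,x_1)$, $\omega(x_1,x_2,x_3)=-\omega(x_2,x_1,x_3)$, and for all $x_i,y_i\in T$: (CC01) $\nu(\alpha(x_1),\alpha(x_2))=\beta(\nu(x_1,x_2))$; (CC02) $\omega(\alpha(x_1),\alpha(x_2),\alpha(x_3))=\beta(\omega(x_1,x_2,x_3))$; (CC1) $\sum_{\mathrm{cyc}(x_1,x_2,x_3)}\big(\omega(x_1,x_2,x_3)-\rho(\alpha(x_1))\nu(x_2,x_3)+\nu([x_1,x_2],\alpha(x_3))\big)=0$; (CC2) $\sum_{\mathrm{cyc}(x_1,x_2,x_3)}\big(\theta(\alpha(x_1),\alpha(y_1))\nu(x_2,x_3)+\omega([x_1,x_2],\alpha(x_3),\alpha(y_1))\big)=0$;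 (CC3) $\omega(\alpha(x_1),\alpha(x_2),[y_1,y_2])+D(\alpha(x_1),\alpha(x_2))\nu(y_1,y_2)=\nu([x_1,x_2,y_1],\alpha^2(y_2))+\nu(\alpha^2(y_1),[x_1,x_2,y_2])+\rho(\alpha^2(y_1))\omega(x_1,x_2,y_2)-\rho(\alpha^2(y_2))\omega(x_1,x_2,y_1)$; (CC4) $\omega(\alpha^2(x_1),\alpha^2(x_2),[y_1,y_2,y_3])+D(\alpha^2(x_1),\alpha^2(x_2))\omega(y_1,y_2,y_3)=\omega([x_1,x_2,y_1],\alpha^2(y_2),\alpha^2(y_3))+\omega(\alpha^2(y_1),[x_1,x_2,y_2],\alpha^2(y_3))+\omega(\alpha^2(y_1),\alpha^2(y_2),[x_1,x_2,y_3])+\theta(\alpha^2(y_2),\alpha^2(y_3))\omega(x_1,x_2,y_1)-\theta(\alpha^2(y_1),\alpha^2(y_3))\omega(x_1,x_2,y_2)+D(\alpha^2(y_1),\alpha^2(y_2))\omega(x_1,x_2,y_3)$. *)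

From HB Require Import structures.
From mathcomp Require Import all_boot all_order all_algebra.
Set Implicit Arguments. Unset Strict Implicit. Unset Printing Implicit Defensive.
Import GRing.Theory.
Local Open Scope ring_scope.

Section HLYA.
Variables (K : fieldType) (T : lmodType K).

Definition lin_map (f : T -> T) : Prop :=
  forall (a : K) x y, f (a *: x + y) = a *: f x + f y.

Definition bilin (V : lmodType K) (f : T -> T -> V) : Prop :=
  (forall (a : K) x y z, f (a *: x + y) z = a *: f x z + f y z) /\
  (forall (a : K) x y z, f z (a *: x + y) = a *: f z x + f z y).

Definition trilin (V : lmodType K) (f : T -> T -> T -> V) : Prop :=
  (forall (a : K) x y z w, f (a *: x + y) z w = a *: f x z w + f y z w) /\
  (forall (a : K) x y z w, f z (a *: x + y) w = a *: f z x w + f z y w) /\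
  (forall (a : K) x y z w, f z w (a *: x + y) = a *: f z w x + f z w y).

Variables (alpha : T -> T) (br : T -> T -> T) (tr : T -> T -> T -> T).

Definition HLY01 := forall x1 x2, alpha (br x1 x2) = br (alpha x1) (alpha x2).
Definition HLY02 := forall x1 x2 x3,
  alpha (tr x1 x2 x3) = tr (alpha x1) (alpha x2) (alpha x3).
Definition HLY1 := forall x1 x2, br x1 x2 + br x2 x1 = 0.
Definition HLY2 := forall x1 x2 x3, tr x1 x2 x3 + tr x2 x1 x3 = 0.
Definition HLY3 := forall x1 x2 x3,
  (br (br x1 x2) (alpha x3) + tr x1 x2 x3)
  + (br (br x2 x3) (alpha x1) + tr x2 x3 x1)
  + (br (br x3 x1) (alpha x2) + tr x3 x1 x2) = 0.
Definition HLY3' := forall x1 x2 x3,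
  br (br x1 x2) (alpha x3) + br (br x2 x3) (alpha x1)
  + br (br x3 x1) (alpha x2) = 0.
Definition HLY4 := forall x1 x2 x3 y1,
  tr (br x1 x2) (alpha x3) (alpha y1) + tr (br x2 x3) (alpha x1) (alpha y1)
  + tr (br x3 x1) (alpha x2) (alpha y1) = 0.
Definition HLY5 := forall x1 x2 y1 y2,
  tr (alpha x1) (alpha x2) (br y1 y2)
  = br (tr x1 x2 y1) (alpha (alpha y2)) + br (alpha (alpha y1)) (tr x1 x2 y2).
Definition HLY6 := forall x1 x2 y1 y2 y3,
  tr (alpha (alpha x1)) (alpha (alpha x2)) (tr y1 y2 y3)
  = tr (tr x1 x2 y1) (alpha (alpha y2)) (alpha (alpha y3))
  + tr (alpha (alpha y1)) (tr x1 x2 y2) (alpha (alpha y3))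
  + tr (alpha (alpha y1)) (alpha (alpha y2)) (tr x1 x2 y3).

Definition is_HLYA : Prop :=
  [/\ lin_map alpha, bilin br, trilin tr,
      [/\ HLY01, HLY02, HLY1 & HLY2] &
      [/\ HLY3, HLY4, HLY5 & HLY6]].

Definition is_HLYA_deftype : Prop :=
  [/\ lin_map alpha, bilin br, trilin tr,
      [/\ HLY01, HLY02, HLY1 & HLY2] &
      [/\ HLY3', HLY4, HLY5 & HLY6]].

Definition cocycle23 (V : lmodType K) (beta : V -> V) (rho : T -> V -> V)
  (D theta : T -> T -> V -> V) (nu : T -> T -> V) (omega : T -> T -> T -> V) : Prop :=
  [/\ (forall x1 x2, nu x1 x2 = - nu x2 x1),
      (forall x1 x2 x3, omega x1 x2 x3 = - omega x2 x1 x3),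
      (forall x1 x2, nu (alpha x1) (alpha x2) = beta (nu x1 x2)),
      (forall x1 x2 x3,
         omega (alpha x1) (alpha x2) (alpha x3) = beta (omega x1 x2 x3)) &
   [/\
      (forall x1 x2 x3,
         (omega x1 x2 x3 - rho (alpha x1) (nu x2 x3) + nu (br x1 x2) (alpha x3))
       + (omega x2 x3 x1 - rho (alpha x2) (nu x3 x1) + nu (br x2 x3) (alpha x1))
       + (omega x3 x1 x2 - rho (alpha x3) (nu x1 x2) + nu (br x3 x1) (alpha x2))
       = 0),
      (forall x1 x2 x3 y1,
         (theta (alpha x1) (alpha y1) (nu x2 x3)
            + omega (br x1 x2) (alpha x3) (alpha y1))
       + (theta (alpha x2) (alpha y1) (nu x3 x1)
            + omega (br x2 x3) (alpha x1) (alpha y1))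
       + (theta (alpha x3) (alpha y1) (nu x1 x2)
            + omega (br x3 x1) (alpha x2) (alpha y1)) = 0),
      (forall x1 x2 y1 y2,
         omega (alpha x1) (alpha x2) (br y1 y2) + D (alpha x1) (alpha x2) (nu y1 y2)
         = nu (tr x1 x2 y1) (alpha (alpha y2)) + nu (alpha (alpha y1)) (tr x1 x2 y2)
           + rho (alpha (alpha y1)) (omega x1 x2 y2)
           - rho (alpha (alpha y2)) (omega x1 x2 y1)) &
      (forall x1 x2 y1 y2 y3,
         omega (alpha (alpha x1)) (alpha (alpha x2)) (tr y1 y2 y3)
           + D (alpha (alpha x1)) (alpha (alpha x2)) (omega y1 y2 y3)
         = omega (tr x1 x2 y1) (alpha (alpha y2)) (alpha (alpha y3))
           + omega (alpha (alpha y1)) (tr x1 x2 y2) (alpha (alpha y3))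
           + omega (alpha (alpha y1)) (alpha (alpha y2)) (tr x1 x2 y3)
           + theta (alpha (alpha y2)) (alpha (alpha y3)) (omega x1 x2 y1)
           - theta (alpha (alpha y1)) (alpha (alpha y3)) (omega x1 x2 y2)
           + D (alpha (alpha y1)) (alpha (alpha y2)) (omega x1 x2 y3))]].

Definition adj_rho : T -> T -> T := br.
Definition adj_D : T -> T -> T -> T := tr.
Definition adj_theta : T -> T -> T -> T := fun x1 x2 x3 => tr x3 x1 x2.

Definition cocycle23_adj (nu : T -> T -> T) (omega : T -> T -> T -> T) : Prop :=
  cocycle23 alpha adj_rho adj_D adj_theta nu omega.

End HLYA.

Definition gen_inf_deformation (K : fieldType) (T : lmodType K) (alpha : T -> T)
  (br : T -> T -> T) (tr : T -> T -> T -> T)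
  (nu : T -> T -> T) (omega : T -> T -> T -> T) : Prop :=
  forall lam : K,
    is_HLYA alpha (fun x1 x2 => br x1 x2 + lam *: nu x1 x2)
                  (fun x1 x2 x3 => tr x1 x2 x3 + lam *: omega x1 x2 x3).

From HB Require Import structures.
From mathcomp Require Import all_boot all_order all_algebra.
Set Implicit Arguments. Unset Strict Implicit. Unset Printing Implicit Defensive.
Import GRing.Theory.
Local Open Scope ring_scope.

(* Each axiom of the deformed brackets is an identity of degree at most two
   in lambda. Its constant coefficient is the axiom for T, its lambda^2
   coefficient is the axiom for (nu, omega) and its lambda coefficient is the
   corresponding cocycle condition with adjoint coefficients. A quadratic
   a + l b + l^2 c vanishing at l = 0, 1, -1 has a = b = c = 0 once 2 != 0, so
   the identity holds for every lambda iff its three coefficients vanish. *)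

Section Quadratic.
Variables (K : fieldType) (V : lmodType K).

Definition quad (l : K) (a b c : V) := a + l *: b + (l * l) *: c.

Lemma quadD l a b c a' b' c' :
  quad l a b c + quad l a' b' c' = quad l (a + a') (b + b') (c + c').
Proof. by rewrite /quad !scalerDr addrACA [X in X + _]addrACA. Qed.

Lemma quadB l a b c a' b' c' :
  quad l a b c - quad l a' b' c' = quad l (a - a') (b - b') (c - c').
Proof. by rewrite /quad !scalerDr !scalerN !opprD addrACA [X in X + _]addrACA. Qed.

Lemma quad_c0 l a b : quad l a b 0 = a + l *: b.
Proof. by rewrite /quad scaler0 addr0. Qed.

Lemma quad0 l : quad l 0 0 0 = 0.
Proof. by rewrite /quad !scaler0 !addr0. Qed.

Hypothesis two_neq0 : (2%:R : K) != 0.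

Lemma quad_eq0 a b c : quad 0 a b c = 0 -> quad 1 a b c = 0 -> quad (-1) a b c = 0 ->
  [/\ a = 0, b = 0 & c = 0].
Proof.
rewrite /quad mulr0 !scale0r !addr0 => a0; rewrite a0 add0r mulr1 !scale1r.
move=> /eqP; rewrite addr_eq0 => /eqP ->.
rewrite mulrNN mulr1 scale1r scaleN1r opprK => c2.
suff -> : c = 0 by rewrite oppr0.
apply: (scalerI two_neq0); rewrite scaler0 scaler_nat mulr2n.
by rewrite -c2 add0r.
Qed.

Lemma quad_inj a b c a' b' c' : quad 0 a b c = quad 0 a' b' c' ->
  quad 1 a b c = quad 1 a' b' c' -> quad (-1) a b c = quad (-1) a' b' c' ->
  [/\ a = a', b = b' & c = c'].
Proof.
move=> e0 e1 e2; have [] := @quad_eq0 (a - a') (b - b') (c - c').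
- by rewrite -quadB e0 subrr.
- by rewrite -quadB e1 subrr.
- by rewrite -quadB e2 subrr.
by move=> /subr0_eq -> /subr0_eq -> /subr0_eq ->.
Qed.

End Quadratic.

Section Expansion.
Variables (K : fieldType) (T : lmodType K).

Lemma linear_deform (U W : lmodType K) (h k : U -> W) : linear h -> linear k ->
  forall l a b, h (a + l *: b) + l *: k (a + l *: b) = quad l (h a) (h b + k a) (k b).
Proof.
move=> /GRing.semilinear_linear [hZ hD] /GRing.semilinear_linear [kZ kD] l a b.
by rewrite hD kD hZ kZ /quad !scalerDr scalerA !addrA.
Qed.

Lemma linear_deform_fun (U W : lmodType K) (h k : U -> W) l :
  linear h -> linear k -> linear (fun x => h x + l *: k x).
Proof.
move=> h_lin k_lin a x y.
by rewrite h_lin k_lin !scalerDr !scalerA [l * a]mulrC addrACA.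
Qed.

Section Bilinear.
Variables (f g : T -> T -> T).
Hypotheses (f_bilin : bilin f) (g_bilin : bilin g).

Lemma bilin_deforml l a b w :
  f (a + l *: b) w + l *: g (a + l *: b) w = quad l (f a w) (f b w + g a w) (g b w).
Proof.
exact: (linear_deform (fun c x y => f_bilin.1 c x y w) (fun c x y => g_bilin.1 c x y w)).
Qed.

Lemma bilin_deformr l a b w :
  f w (a + l *: b) + l *: g w (a + l *: b) = quad l (f w a) (f w b + g w a) (g w b).
Proof.
exact: (linear_deform (fun c x y => f_bilin.2 c x y w) (fun c x y => g_bilin.2 c x y w)).
Qed.

End Bilinear.

Section Trilinear.
Variables (f g : T -> T -> T -> T).
Hypotheses (f_trilin : trilin f) (g_trilin : trilin g).

Lemma trilin_deform1 l a b w z :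
  f (a + l *: b) w z + l *: g (a + l *: b) w z
  = quad l (f a w z) (f b w z + g a w z) (g b w z).
Proof.
have [f1 _] := f_trilin; have [g1 _] := g_trilin.
exact: (linear_deform (fun c x y => f1 c x y w z) (fun c x y => g1 c x y w z)).
Qed.

Lemma trilin_deform2 l a b w z :
  f w (a + l *: b) z + l *: g w (a + l *: b) z
  = quad l (f w a z) (f w b z + g w a z) (g w b z).
Proof.
have [_ [f2 _]] := f_trilin; have [_ [g2 _]] := g_trilin.
exact: (linear_deform (fun c x y => f2 c x y w z) (fun c x y => g2 c x y w z)).
Qed.

Lemma trilin_deform3 l a b w z :
  f w z (a + l *: b) + l *: g w z (a + l *: b)
  = quad l (f w z a) (f w z b + g w z a) (g w z b).
Proof.
have [_ [_ f3]] := f_trilin; have [_ [_ g3]] := g_trilin.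
exact: (linear_deform (fun c x y => f3 c x y w z) (fun c x y => g3 c x y w z)).
Qed.

End Trilinear.
End Expansion.

Section Deformation.
Variables (K : fieldType) (T : lmodType K) (alpha : T -> T).
Variables (br nu : T -> T -> T) (tr omega : T -> T -> T -> T).
Hypotheses (br_bilin : bilin br) (nu_bilin : bilin nu).
Hypotheses (tr_trilin : trilin tr) (omega_trilin : trilin omega).

Definition deform_br l x y := br x y + l *: nu x y.
Definition deform_tr l x y z := tr x y z + l *: omega x y z.

Lemma deform_br_bilin l : bilin (deform_br l).
Proof.
have [br1 br2] := br_bilin; have [nu1 nu2] := nu_bilin.
split=> a x y z.
  exact: (linear_deform_fun l (fun c x y => br1 c x y z) (fun c x y => nu1 c x y z)).
exact: (linear_deform_fun l (fun c x y => br2 c x y z) (fun c x y => nu2 c x y z)).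
Qed.

Lemma deform_tr_trilin l : trilin (deform_tr l).
Proof.
have [tr1 [tr2 tr3]] := tr_trilin; have [om1 [om2 om3]] := omega_trilin.
split; [|split]=> a x y z w.
- exact: (linear_deform_fun l (fun c x y => tr1 c x y z w) (fun c x y => om1 c x y z w)).
- exact: (linear_deform_fun l (fun c x y => tr2 c x y z w) (fun c x y => om2 c x y z w)).
- exact: (linear_deform_fun l (fun c x y => tr3 c x y z w) (fun c x y => om3 c x y z w)).
Qed.

Lemma gen_inf_deformationP : lin_map alpha ->
  gen_inf_deformation alpha br tr nu omega <->
  [/\ (forall l, HLY01 alpha (deform_br l)), (forall l, HLY02 alpha (deform_tr l)),
      (forall l, HLY1 (deform_br l)) & (forall l, HLY2 (deform_tr l))] /\
  [/\ (forall l, HLY3 alpha (deform_br l) (deform_tr l)),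
      (forall l, HLY4 alpha (deform_br l) (deform_tr l)),
      (forall l, HLY5 alpha (deform_br l) (deform_tr l)) &
      (forall l, HLY6 alpha (deform_tr l))].
Proof.
move=> a_lin; split=> [D | [[D01 D02 D1 D2] [D3 D4 D5 D6]] l].
  by split; split=> l; have [_ _ _ [? ? ? ?] [? ? ? ?]] := D l.
split; [exact: a_lin | exact: deform_br_bilin | exact: deform_tr_trilin | |].
  exact: And4 (D01 l) (D02 l) (D1 l) (D2 l).
exact: And4 (D3 l) (D4 l) (D5 l) (D6 l).
Qed.

Ltac expand_deform :=
  rewrite /deform_br /deform_tr ?(bilin_deforml br_bilin nu_bilin)
    ?(bilin_deformr br_bilin nu_bilin) ?(trilin_deform1 tr_trilin omega_trilin)
    ?(trilin_deform2 tr_trilin omega_trilin) ?(trilin_deform3 tr_trilin omega_trilin)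
    -?(quad_c0 _ (tr _ _ _)) ?quadD.

Lemma deform_HLY01P : lin_map alpha -> HLY01 alpha br ->
  (forall l, HLY01 alpha (deform_br l)) <-> HLY01 alpha nu.
Proof.
move=> a_lin H01; have [aZ aD] := GRing.semilinear_linear a_lin.
split=> [D x y | N l x y]; last by rewrite /deform_br aD aZ H01 N.
by have := D 1 x y; rewrite /deform_br aD aZ /= !scale1r H01 => /addrI.
Qed.

Lemma deform_HLY02P : lin_map alpha -> HLY02 alpha tr ->
  (forall l, HLY02 alpha (deform_tr l)) <-> HLY02 alpha omega.
Proof.
move=> a_lin H02; have [aZ aD] := GRing.semilinear_linear a_lin.
split=> [D x y z | N l x y z]; last by rewrite /deform_tr aD aZ H02 N.
by have := D 1 x y z; rewrite /deform_tr aD aZ /= !scale1r H02 => /addrI.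
Qed.

Lemma deform_HLY1P : HLY1 br -> (forall l, HLY1 (deform_br l)) <-> HLY1 nu.
Proof.
move=> H1; split=> [D x y | N l x y].
  by have := D 1 x y; rewrite /deform_br !scale1r addrACA H1 add0r.
by rewrite /deform_br addrACA H1 -scalerDr N scaler0 addr0.
Qed.

Lemma deform_HLY2P : HLY2 tr -> (forall l, HLY2 (deform_tr l)) <-> HLY2 omega.
Proof.
move=> H2; split=> [D x y z | N l x y z].
  by have := D 1 x y z; rewrite /deform_tr !scale1r addrACA H2 add0r.
by rewrite /deform_tr addrACA H2 -scalerDr N scaler0 addr0.
Qed.

Hypothesis two_neq0 : (2%:R : K) != 0.

Lemma deform_HLY3P : HLY1 br -> HLY3 alpha br tr ->
  (forall l, HLY3 alpha (deform_br l) (deform_tr l)) <->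
  HLY3' alpha nu /\
  (forall x1 x2 x3,
     (omega x1 x2 x3 - br (alpha x1) (nu x2 x3) + nu (br x1 x2) (alpha x3))
   + (omega x2 x3 x1 - br (alpha x2) (nu x3 x1) + nu (br x2 x3) (alpha x1))
   + (omega x3 x1 x2 - br (alpha x3) (nu x1 x2) + nu (br x3 x1) (alpha x2)) = 0).
Proof.
move=> H1 H3; have brN a b : - br a b = br b a by exact: addr0_eq.
split=> [D | [N C] l x1 x2 x3].
  split=> x1 x2 x3; move: (D 0 x1 x2 x3) (D 1 x1 x2 x3) (D (-1) x1 x2 x3);
    expand_deform => e0 e1 e2; have [_ b0 c0] := quad_eq0 two_neq0 e0 e1 e2.
    by rewrite !addr0 in c0.
  by rewrite -[RHS]b0 !brN !addrA [LHS](ACl (8*3*1*2*6*4*5*9*7)).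
expand_deform; rewrite -[RHS](quad0 _ l); congr quad; first exact: H3.
  by rewrite -[RHS](C x1 x2 x3) !brN !addrA [RHS](ACl (8*3*1*2*6*4*5*9*7)).
by rewrite !addr0 N.
Qed.

Lemma deform_HLY4P : HLY4 alpha br tr ->
  (forall l, HLY4 alpha (deform_br l) (deform_tr l)) <->
  HLY4 alpha nu omega /\
  (forall x1 x2 x3 y1,
     (tr (nu x2 x3) (alpha x1) (alpha y1) + omega (br x1 x2) (alpha x3) (alpha y1))
   + (tr (nu x3 x1) (alpha x2) (alpha y1) + omega (br x2 x3) (alpha x1) (alpha y1))
   + (tr (nu x1 x2) (alpha x3) (alpha y1) + omega (br x3 x1) (alpha x2) (alpha y1))
   = 0).
Proof.
move=> H4; split=> [D | [N C] l x1 x2 x3 y1].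
  split=> x1 x2 x3 y1; move: (D 0 x1 x2 x3 y1) (D 1 x1 x2 x3 y1) (D (-1) x1 x2 x3 y1);
    expand_deform => e0 e1 e2; have [_ b0 c0] := quad_eq0 two_neq0 e0 e1 e2.
    exact: c0.
  by rewrite -[RHS]b0 !addrA [LHS](ACl (5*2*1*4*3*6)).
expand_deform; rewrite -[RHS](quad0 _ l); congr quad; first exact: H4.
  by rewrite -[RHS](C x1 x2 x3 y1) !addrA [RHS](ACl (5*2*1*4*3*6)).
exact: N.
Qed.

Lemma deform_HLY5P : HLY1 br -> HLY5 alpha br tr ->
  (forall l, HLY5 alpha (deform_br l) (deform_tr l)) <->
  HLY5 alpha nu omega /\
  (forall x1 x2 y1 y2,
     omega (alpha x1) (alpha x2) (br y1 y2) + tr (alpha x1) (alpha x2) (nu y1 y2)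
     = nu (tr x1 x2 y1) (alpha (alpha y2)) + nu (alpha (alpha y1)) (tr x1 x2 y2)
       + br (alpha (alpha y1)) (omega x1 x2 y2)
       - br (alpha (alpha y2)) (omega x1 x2 y1)).
Proof.
move=> H1 H5; have brN a b : - br a b = br b a by exact: addr0_eq.
split=> [D | [N C] l x1 x2 y1 y2].
  split=> x1 x2 y1 y2; move: (D 0 x1 x2 y1 y2) (D 1 x1 x2 y1 y2) (D (-1) x1 x2 y1 y2);
    expand_deform => e0 e1 e2; have [_ b0 c0] := quad_inj two_neq0 e0 e1 e2.
    exact: c0.
  by rewrite [LHS]addrC b0 brN !addrA [LHS](ACl (2*4*3*1)).
expand_deform; congr quad; first exact: H5.
  by rewrite [LHS]addrC C brN !addrA [LHS](ACl (4*1*3*2)).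
exact: N.
Qed.

Lemma deform_HLY6P : HLY2 tr -> HLY6 alpha tr ->
  (forall l, HLY6 alpha (deform_tr l)) <->
  HLY6 alpha omega /\
  (forall x1 x2 y1 y2 y3,
     omega (alpha (alpha x1)) (alpha (alpha x2)) (tr y1 y2 y3)
       + tr (alpha (alpha x1)) (alpha (alpha x2)) (omega y1 y2 y3)
     = omega (tr x1 x2 y1) (alpha (alpha y2)) (alpha (alpha y3))
       + omega (alpha (alpha y1)) (tr x1 x2 y2) (alpha (alpha y3))
       + omega (alpha (alpha y1)) (alpha (alpha y2)) (tr x1 x2 y3)
       + tr (omega x1 x2 y1) (alpha (alpha y2)) (alpha (alpha y3))
       - tr (omega x1 x2 y2) (alpha (alpha y1)) (alpha (alpha y3))
       + tr (alpha (alpha y1)) (alpha (alpha y2)) (omega x1 x2 y3)).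
Proof.
move=> H2 H6; have trN a b c : - tr a b c = tr b a c by exact: addr0_eq.
split=> [D | [N C] l x1 x2 y1 y2 y3].
  split=> x1 x2 y1 y2 y3;
    move: (D 0 x1 x2 y1 y2 y3) (D 1 x1 x2 y1 y2 y3) (D (-1) x1 x2 y1 y2 y3);
    expand_deform => e0 e1 e2; have [_ b0 c0] := quad_inj two_neq0 e0 e1 e2.
    exact: c0.
  by rewrite [LHS]addrC b0 trN !addrA [LHS](ACl (2*4*6*1*3*5)).
expand_deform; congr quad; first exact: H6.
  by rewrite [LHS]addrC C trN !addrA [LHS](ACl (4*1*5*2*6*3)).
exact: N.
Qed.

End Deformation.

Theorem theorem3p1 (K : closedFieldType)
  (hchar2 : (2%:R : K) != 0) (hchar3 : (3%:R : K) != 0)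
  (T : lmodType K) (alpha : T -> T) (br : T -> T -> T) (tr : T -> T -> T -> T)
  (nu : T -> T -> T) (omega : T -> T -> T -> T) :
  is_HLYA alpha br tr -> bilin nu -> trilin omega ->
  (gen_inf_deformation alpha br tr nu omega <->
   is_HLYA_deftype alpha nu omega /\ cocycle23_adj alpha br tr nu omega).
Proof.
move=> [a_lin br_bilin tr_trilin [H01 H02 H1 H2] [H3 H4 H5 H6]] nu_bilin om_trilin.
have D01 := deform_HLY01P nu a_lin H01; have D02 := deform_HLY02P omega a_lin H02.
have D1 := deform_HLY1P nu H1; have D2 := deform_HLY2P omega H2.
have D3 := deform_HLY3P omega br_bilin nu_bilin hchar2 H1 H3.
have D4 := deform_HLY4P nu tr_trilin om_trilin hchar2 H4.
have D5 := deform_HLY5P br_bilin nu_bilin tr_trilin om_trilin hchar2 H1 H5.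
have D6 := deform_HLY6P tr_trilin om_trilin hchar2 H2 H6.
apply: iff_trans (gen_inf_deformationP br_bilin nu_bilin tr_trilin om_trilin a_lin) _.
split=> [[[/D01 N01 /D02 N02 /D1 N1 /D2 N2]
           [/D3 [N3 C1] /D4 [N4 C2] /D5 [N5 C3] /D6 [N6 C4]]]
        | [[_ _ _ [N01 N02 N1 N2] [N3 N4 N5 N6]] [_ _ _ _ [C1 C2 C3 C4]]]].
  split; first by split.
  split=> [x y | x y z | x y | x y z | //].
  - exact/esym/addr0_eq/N1.
  - exact/esym/addr0_eq/N2.
  - by rewrite N01.
  - by rewrite N02.
by split; split;
  [apply/D01 | apply/D02 | apply/D1 | apply/D2 | apply/D3 | apply/D4 | apply/D5 | apply/D6].
Qed.
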